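(* Given an instance of the Squared Metric Facility Location Problem, let $\alpha$ be the vector of final budgets produced by Algorithm $A1$. Then for every facility $i$, cities $j$ and $j'$, and all positive reals $\beta,\gamma,\delta$, $$ \alpha_j \le \Big(1 + \beta + \frac{1}{\gamma}\Big) \alpha_{j'} + \Big(1 + \gamma + \frac{1}{\delta}\Big) c_{ij'} + \Big(1 + \delta + \frac{1}{\beta} \Big) c_{ij}. $$
   Context: Facility Location instance: finite disjoint sets $C$ (cities), $F$ (facilities), non-negative $c_{ij}$, $f_i$. Squared metric: $\sqrt{c_{ij}}\le \sqrt{c_{ij'}}+\sqrt{c_{i'j'}}+\sqrt{c_{i'j}}$ for all $i,i'\in F$, $j,j'\in C$. Algorithm $A1$: initially all facilities are unopened and all cities unconnected ($U:=C$); each city $j$ has a budget $\alpha_j=0$; an unconnected city $j$ offers $\max(\alpha_j-c_{ij},0)$ to each unopened facility $i$. While $U\ne\emptyset$, the budgets of all unconnected cities increase continuously at the same rate (connected cities' budgets stay fixed) until: (a) for some unconnected $j$ and open $i$, $\alpha_j=c_{ij}$: connect $j$ to $i$ and remove $j$ from $U$; or (b) for some unopened $i$, $\sum_{j\in U}\max(\alpha_j-c_{ij},0)=f_i$: open $i$ and connect to $i$ every unconnected $j$ with $\alpha_j\ge c_{ij}$, removing them from $U$. *)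

From HB Require Import structures.
From mathcomp Require Import all_boot all_order all_algebra.
From mathcomp Require Import reals.
Set Implicit Arguments. Unset Strict Implicit. Unset Printing Implicit Defensive.
Import Order.TTheory GRing.Theory Num.Theory.
Local Open Scope ring_scope.

(** Facility location instance: cities C, facilities F (finite; disjointness
    is automatic as they are distinct types), costs c i j (facility i,
    city j) and opening costs f i. *)

Section A1.
Variables (R : realType) (C F : finType) (c : F -> C -> R) (f : F -> R).

Definition squared_metric : Prop :=
  forall (i i' : F) (j j' : C),
    Num.sqrt (c i j) <= Num.sqrt (c i j') + Num.sqrt (c i' j') + Num.sqrt (c i' j).

(** State of Algorithm A1 at a moment of its execution:
    - [a1_time]  : current time t (= budget of every unconnected city);
    - [a1_open]  : the set of opened facilities;
    - [a1_U]     : the set U of unconnected cities;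
    - [a1_bud]   : the (frozen) budgets of connected cities. *)
Record a1_state := A1State {
  a1_time : R;
  a1_open : {set F};
  a1_U : {set C};
  a1_bud : C -> R }.

Definition a1_alpha (st : a1_state) (s : R) (j : C) : R :=
  if j \in a1_U st then s else a1_bud st j.

Definition a1_offer (st : a1_state) (s : R) (i : F) : R :=
  \sum_(j in a1_U st) Num.max (a1_alpha st s j - c i j) 0.

Definition a1_event_a (st : a1_state) (s : R) : Prop :=
  exists (j : C) (i : F), [/\ j \in a1_U st, i \in a1_open st & a1_alpha st s j = c i j].

Definition a1_event_b (st : a1_state) (s : R) : Prop :=
  exists i : F, i \notin a1_open st /\ a1_offer st s i = f i.

Definition a1_event (st : a1_state) (s : R) : Prop :=
  a1_event_a st s \/ a1_event_b st s.

(** One iteration of the while loop: U is nonempty, the clock advances to the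
    first time s >= t at which an event occurs (no event at any time in [t, s)),
    and one event occurring at time s is processed (ties are resolved
    arbitrarily, one event per step; remaining simultaneous events are
    processed in later steps at the same time s). *)
Definition a1_step (st st' : a1_state) : Prop :=
  exists s : R,
    [/\ a1_U st != set0,
        a1_time st <= s,
        (forall s', a1_time st <= s' -> s' < s -> ~ a1_event st s'),
        a1_time st' = s &
        ((exists (j : C) (i : F),
           [/\ (j \in a1_U st) && (i \in a1_open st), a1_alpha st s j = c i j,
               a1_open st' = a1_open st,
               a1_U st' = a1_U st :\ j &
               a1_bud st' = fun k => if k == j then s else a1_bud st k])
        \/
        (exists i : F,
           [/\ i \notin a1_open st, a1_offer st s i = f i,
               a1_open st' = i |: a1_open st,
               a1_U st' = [set k in a1_U st | a1_alpha st s k < c i k] &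
               a1_bud st' = fun k =>
                 if (k \in a1_U st) && (c i k <= a1_alpha st s k)
                 then a1_alpha st s k else a1_bud st k]))].

Definition a1_init : a1_state := A1State 0 set0 [set: C] (fun _ => 0).

Inductive a1_reach : a1_state -> Prop :=
| a1_reach_init : a1_reach a1_init
| a1_reach_step st st' : a1_reach st -> a1_step st st' -> a1_reach st'.

Definition A1_final_budgets (alpha : C -> R) : Prop :=
  exists st : a1_state,
    [/\ a1_reach st, a1_U st = set0 & forall j, alpha j = a1_alpha st (a1_time st) j].

End A1.

From HB Require Import structures.
From mathcomp Require Import all_boot all_order all_algebra.
From mathcomp Require Import reals.
From mathcomp Require Import ring lra.
Import Order.TTheory GRing.Theory Num.Theory.
Local Open Scope ring_scope.

(* When a city j' gets connected, the facility i' it connects to is open and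
   c i' j' <= alpha j'.  Any other city j is then either already connected (so
   alpha j <= alpha j') or still unconnected, in which case it will connect no
   later than when its budget reaches c i' j, since i' stays open.  In the
   second case the squared metric gives
   sqrt (c i' j) <= sqrt (alpha j') + sqrt (c i j') + sqrt (c i j), and the
   weighted AM-GM bound 2xy <= g y^2 + x^2 / g on the three cross terms of the
   square yields the claimed coefficients. *)

Lemma sqr_add3_le {R : realFieldType} {x y z b g d : R} :
  0 < b -> 0 < g -> 0 < d ->
  (x + y + z) ^+ 2 <= (1 + b + g^-1) * x ^+ 2 + (1 + g + d^-1) * y ^+ 2
                      + (1 + d + b^-1) * z ^+ 2.
Proof.
have amgm (e u v : R) : 0 < e -> 2 * u * v <= e * u ^+ 2 + e^-1 * v ^+ 2.
  move=> e0; have ee : e * e^-1 = 1 by rewrite mulfV // gt_eqF.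
  have : 0 <= e^-1 * (e * u - v) ^+ 2 by rewrite mulr_ge0 ?sqr_ge0 // invr_ge0 ltW.
  have -> : e^-1 * (e * u - v) ^+ 2
          = (e * e^-1) * (e * u ^+ 2) - 2 * (e * e^-1) * u * v + e^-1 * v ^+ 2 by ring.
  by rewrite ee; lra.
move=> b0 g0 d0; have := amgm _ x z b0; have := amgm _ y x g0; have := amgm _ z y d0.
have -> : (x + y + z) ^+ 2 = x ^+ 2 + y ^+ 2 + z ^+ 2 + 2 * y * x + 2 * z * y + 2 * x * z
  by ring.
lra.
Qed.

Lemma le_sqr_of_sqrt_le (R : rcfType) (x s : R) :
  0 <= x -> Num.sqrt x <= s -> x <= s ^+ 2.
Proof.
move=> x0 hs; rewrite -(sqr_sqrtr x0).
by rewrite lerXn2r // ?nnegrE ?sqrtr_ge0 // (le_trans _ hs) ?sqrtr_ge0.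
Qed.

Section SquaredMetric.
Local Set Implicit Arguments.
Local Unset Strict Implicit.
Variables (R : realType) (C F : finType) (c : F -> C -> R).
Hypotheses (c_ge0 : forall i j, 0 <= c i j) (hsq : squared_metric c).

Lemma squared_metric_le_sqr i i' j j' (a : R) :
  c i' j' <= a -> c i' j <= (Num.sqrt a + Num.sqrt (c i j') + Num.sqrt (c i j)) ^+ 2.
Proof.
move=> ha; apply: le_sqr_of_sqrt_le => //.
have : Num.sqrt (c i' j') <= Num.sqrt a by rewrite ler_sqrt // (le_trans _ ha).
by have := hsq i' i j j'; lra.
Qed.

End SquaredMetric.

Section Invariant.
Local Set Implicit Arguments.
Local Unset Strict Implicit.
Variables (R : realType) (C F : finType) (c : F -> C -> R) (f : F -> R).

Lemma a1_alpha_unconnected (st : a1_state R C F) s j :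
  j \in a1_U st -> a1_alpha st s j = s.
Proof. by rewrite /a1_alpha => ->. Qed.

Lemma a1_alpha_connected (st : a1_state R C F) s j :
  j \notin a1_U st -> a1_alpha st s j = a1_bud st j.
Proof. by rewrite /a1_alpha => /negbTE ->. Qed.

Definition a1_inv (st : a1_state R C F) : Prop :=
  [/\ 0 <= a1_time st,
      (forall j, j \notin a1_U st -> 0 <= a1_bud st j <= a1_time st),
      (forall i j, i \in a1_open st -> j \in a1_U st -> a1_time st <= c i j) &
      (forall j', j' \notin a1_U st -> exists2 i', i' \in a1_open st &
         c i' j' <= a1_bud st j' /\
         forall j, j \notin a1_U st ->
           a1_bud st j <= a1_bud st j' \/ a1_bud st j <= c i' j)].

Lemma a1_inv_init : a1_inv (a1_init R C F).
Proof. by split=> [|j|i j|j] //=; rewrite inE. Qed.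

Lemma a1_step_before_event (st : a1_state R C F) s i j :
  a1_inv st -> a1_time st <= s ->
  (forall s', a1_time st <= s' -> s' < s -> ~ a1_event c f st s') ->
  i \in a1_open st -> j \in a1_U st -> s <= c i j.
Proof.
case=> _ _ hreach _ hts hno hi hj; rewrite leNgt; apply/negP => hlt.
apply: (hno (c i j) (hreach _ _ hi hj) hlt); left; exists j, i.
by rewrite a1_alpha_unconnected.
Qed.

Section Step.
Variables (st : a1_state R C F) (s : R).
Hypotheses (hinv : a1_inv st) (hts : a1_time st <= s)
  (hfirst : forall i j, i \in a1_open st -> j \in a1_U st -> s <= c i j).

Let s_ge0 : 0 <= s. Proof. by case: hinv => t0 _ _ _; exact: le_trans hts. Qed.

Let bud_le k : k \notin a1_U st -> 0 <= a1_bud st k <= s.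
Proof. by case: hinv => _ hB _ _ /hB /andP[-> /le_trans->]. Qed.

Lemma a1_inv_event_a i j :
  j \in a1_U st -> i \in a1_open st -> a1_alpha st s j = c i j ->
  a1_inv (A1State s (a1_open st) (a1_U st :\ j)
            (fun k => if k == j then s else a1_bud st k)).
Proof.
move=> hj hi; rewrite a1_alpha_unconnected // => hs.
have connected k : k \notin a1_U st :\ j -> k = j \/ (k != j) && (k \notin a1_U st).
  rewrite in_setD1 negb_and negbK => /orP[/eqP|hk]; first by left.
  by right; rewrite hk andbT; apply: contraNneq hk => ->.
case: hinv => _ _ _ hwit.
split=> //= [k /connected [->|/andP[/negbTE-> /bud_le//]]|i0 k hi0|j'].
- by rewrite eqxx s_ge0 lexx.
- by rewrite in_setD1 => /andP[_]; exact: hfirst.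
move=> /connected [->|/andP[/negbTE-> hj']].
  exists i => //; rewrite eqxx hs; split=> // k /connected [->|/andP[/negbTE->]].
    by rewrite eqxx; left.
  by move/bud_le/andP=> [_ hk]; left; rewrite -hs.
have [i' hi' [hc hall]] := hwit _ hj'.
exists i' => //; split=> // k /connected [->|/andP[/negbTE-> /hall//]].
by rewrite eqxx; right; exact: hfirst.
Qed.

Lemma a1_inv_event_b i :
  a1_inv (A1State s (i |: a1_open st) [set k in a1_U st | a1_alpha st s k < c i k]
            (fun k => if (k \in a1_U st) && (c i k <= a1_alpha st s k)
                      then a1_alpha st s k else a1_bud st k)).
Proof.
set U' := [set k in _ | _]; set bud' := fun k => _.
have newly k : k \in a1_U st -> k \notin U' -> c i k <= s /\ bud' k = s.
  move=> hk; rewrite inE hk /= a1_alpha_unconnected // -leNgt => hle.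
  by rewrite /bud' hk a1_alpha_unconnected // hle.
have before k : k \notin a1_U st -> bud' k = a1_bud st k by rewrite /bud' => /negbTE->.
have bud'_le k : k \notin U' -> 0 <= bud' k <= s.
  case: (boolP (k \in a1_U st)) => hk hk'; last by rewrite before // bud_le.
  by have [_ ->] := newly _ hk hk'; rewrite s_ge0 lexx.
case: hinv => _ _ _ hwit; split=> //= [i0 k|j'].
  rewrite in_setU1 inE => /orP[/eqP-> /andP[hk]|hi0 /andP[hk _]]; last exact: hfirst.
  by rewrite a1_alpha_unconnected // => /ltW.
case: (boolP (j' \in a1_U st)) => hj hj'.
  have [hc hb] := newly _ hj hj'.
  exists i; first by rewrite setU11.
  by rewrite hb; split=> // k /bud'_le/andP[_ hk]; left.
have [i' hi' [hc hall]] := hwit _ hj.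
exists i'; first by rewrite in_setU1 hi' orbT.
rewrite before //; split=> // k.
case: (boolP (k \in a1_U st)) => hk hk'; last by rewrite before //; exact: hall.
by have [_ ->] := newly _ hk hk'; right; exact: hfirst.
Qed.

End Step.

Lemma a1_inv_step (st st' : a1_state R C F) :
  a1_inv st -> a1_step c f st st' -> a1_inv st'.
Proof.
move=> hinv [s [_ hts hno]]; have hfirst := a1_step_before_event hinv hts hno.
case: st' => t' o' U' b' /= -> [[j [i [/andP[hj hi] hal -> -> ->]]]|[i [_ _ -> -> ->]]].
- exact: (a1_inv_event_a hinv hts hfirst hj hi hal).
- exact: (a1_inv_event_b hinv hts hfirst).
Qed.

Lemma a1_reach_inv (st : a1_state R C F) : a1_reach c f st -> a1_inv st.
Proof. by elim=> [|st0 st1 _ IH]; [exact: a1_inv_init | exact: a1_inv_step]. Qed.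

Lemma final_budgets_witness (alpha : C -> R) :
  A1_final_budgets c f alpha ->
  (forall j, 0 <= alpha j) /\
  forall j', exists2 i', c i' j' <= alpha j' &
    forall j, alpha j <= alpha j' \/ alpha j <= c i' j.
Proof.
case=> st [/a1_reach_inv [_ hB _ hwit] hU hal].
have conn k : k \notin a1_U st by rewrite hU inE.
have budE k : alpha k = a1_bud st k by rewrite hal a1_alpha_connected.
split=> [j|j']; first by rewrite budE; case/andP: (hB _ (conn j)).
have [i' _ [hc hall]] := hwit _ (conn j').
by exists i' => [|j]; rewrite !budE //; exact: hall.
Qed.

End Invariant.

Theorem lemma3 (R : realType) (C F : finType) (c : F -> C -> R) (f : F -> R)
  (c_ge0 : forall i j, 0 <= c i j) (f_ge0 : forall i, 0 <= f i)
  (hsq : squared_metric c)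
  (alpha : C -> R) (halpha : A1_final_budgets c f alpha) :
  forall (i : F) (j j' : C) (beta gamma delta : R),
    0 < beta -> 0 < gamma -> 0 < delta ->
    alpha j <= (1 + beta + gamma^-1) * alpha j'
               + (1 + gamma + delta^-1) * c i j'
               + (1 + delta + beta^-1) * c i j.
Proof.
move=> i j j' b g d b0 g0 d0.
have [alpha_ge0 /(_ j') [i' hc hall]] := final_budgets_witness halpha.
have coef_ge1 (x y : R) : 0 < x -> 0 < y -> 1 <= 1 + x + y^-1.
  by move=> x0 y0; rewrite -addrA lerDl addr_ge0 // ltW // invr_gt0.
have := coef_ge1 _ _ b0 g0; have := coef_ge1 _ _ g0 d0; have := coef_ge1 _ _ d0 b0.
have := alpha_ge0 j'; have := c_ge0 i j; have := c_ge0 i j'.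
case: (hall j) => [|hj _ _ _ _ _ _]; first by nra.
apply: le_trans hj _; apply: le_trans (squared_metric_le_sqr c_ge0 hsq i j hc) _.
by apply: le_trans (sqr_add3_le b0 g0 d0) _; rewrite !sqr_sqrtr ?c_ge0.
Qed.
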